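(* Let $I=\{1,\dots,k+\ell\}\subseteq V$ where $C_1=\{1,\dots,k\}$ and $C_2=\{k+1,\dots,k+\ell\}$ are disjoint cliques of $G$ such that at least one vertex of $C_1$ and one vertex of $C_2$ are nonadjacent (edges between $C_1$ and $C_2$ may otherwise be arbitrary). Let $X_I$ be a symmetric matrix with $X_I\succeq 0$, $X_I\geq 0$ (entrywise), diagonal entries $x_1,\dots,x_{k+\ell}$, and $(X_I)_{i,j}=0$ for every edge $[i,j]$ of $G_I$ (in particular for distinct $i,j$ in the same clique). Then $X_I\in\mathrm{STAB}^2(G_I)$ if and only if $$\sum_{j=1}^{\ell}X_{i,k+j}\leq x_i\ (1\leq i\leq k),\qquad \sum_{i=1}^{k}X_{i,k+j}\leq x_{k+j}\ (1\leq j\leq \ell),\qquad \sum_{i=1}^{k+\ell}x_i\leq 1+\sum_{i=1}^k\sum_{j=1}^{\ell}X_{i,k+j}.$$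
   Context: Let $G$ be a simple graph with vertex set $V=\{1,\dots,n\}$ and edge set $E$; $G_I$ denotes the subgraph induced by $I\subseteq V$. For a graph $H$ with vertex set $I$, let $S(H)=\{s\in\{0,1\}^I: s_is_j=0\ \forall [i,j]\in E(H)\}$ (incidence vectors of stable sets, including the zero vector) and $\mathrm{STAB}^2(H)=\operatorname{conv}\{ss^T: s\in S(H)\}$. *)

From HB Require Import structures.
From mathcomp Require Import all_boot all_order all_algebra.
From mathcomp Require Import reals.
Set Implicit Arguments. Unset Strict Implicit. Unset Printing Implicit Defensive.
Import Order.TTheory GRing.Theory Num.Theory.
Local Open Scope ring_scope.

Definition simple_graph (n : nat) (e : rel 'I_n) : Prop :=
  (forall i j, e i j = e j i) /\ (forall i, ~~ e i i).

(* Induced subgraph G_I on I = {0,...,m-1} (the first m vertices), m <= n. *)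
Definition induced_first (n m : nat) (h : (m <= n)%N) (e : rel 'I_n) : rel 'I_m :=
  fun i j => e (widen_ord h i) (widen_ord h j).

Definition stable (m : nat) (e : rel 'I_m) (A : {set 'I_m}) : bool :=
  [forall i, forall j, ((i \in A) && (j \in A)) ==> ~~ e i j].

Definition incv (R : nzRingType) (m : nat) (A : {set 'I_m}) : 'cV[R]_m :=
  \col_i (i \in A)%:R.

(* STAB^2(H) = conv { s s^T : s in S(H) }: convex combinations over the
   (finitely many) stable sets. *)
Definition STAB2 (R : realType) (m : nat) (e : rel 'I_m) (X : 'M[R]_m) : Prop :=
  exists lam : {set 'I_m} -> R,
    [/\ forall A, 0 <= lam A,
        forall A, ~~ stable e A -> lam A = 0,
        \sum_(A : {set 'I_m}) lam A = 1 &
        X = \sum_(A : {set 'I_m}) lam A *: (incv R A *m (incv R A)^T)].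

Definition psd (R : realType) (m : nat) (X : 'M[R]_m) : Prop :=
  forall v : 'cV[R]_m, 0 <= (v^T *m X *m v) 0 0.

From HB Require Import structures.
From mathcomp Require Import all_boot all_order all_algebra.
From mathcomp Require Import reals ring lra.
Set Implicit Arguments.
Unset Strict Implicit.
Unset Printing Implicit Defensive.
Import Order.TTheory GRing.Theory Num.Theory.
Local Open Scope ring_scope.

(* Necessity: a stable set meets each clique in at most one vertex, so its
   clique counts u, v lie in {0, 1}; the three inequalities then hold for
   every s s^T (the last one reads (1 - u) (1 - v) >= 0), and being linear
   in X they pass to convex combinations.
   Sufficiency holds in any graph: if X vanishes on edges, is nonnegative,
   has slacks s_a = X_aa - sum_(b != a) X_ab >= 0 and trace at most
   1 + sum_(a < b) X_ab, then X is the convex combination of e_a e_a^T with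
   weight s_a, of (e_a + e_b) (e_a + e_b)^T with weight X_ab for each pair
   (a non-edge whenever X_ab > 0), and of 0 with the remaining weight.  For
   two cliques the off-diagonal row sums of X are the cross sums. *)

Lemma natr_bool_mulrr (R : nzSemiRingType) (b : bool) : b%:R * b%:R = b%:R :> R.
Proof. by case: b; rewrite ?mulr1 ?mulr0. Qed.

Lemma sum_natr_eqMl (R : nzSemiRingType) (T : finType) (P : pred T)
    (F : T -> R) (p : T) :
  P p -> \sum_(a | P a) (a == p)%:R * F a = F p.
Proof.
move=> Pp; rewrite (bigD1 p) //= eqxx mul1r big1 ?addr0 // => a /andP[_].
by move/negbTE->; rewrite mul0r.
Qed.

Lemma sum_natr_eqMr (R : nzSemiRingType) (T : finType) (P : pred T)
    (F : T -> R) (p : T) :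
  P p -> \sum_(a | P a) F a * (p == a)%:R = F p.
Proof.
move=> Pp; under eq_bigr do rewrite mulr_natr eq_sym -mulr_natl.
exact: sum_natr_eqMl.
Qed.

Lemma sum_natr_le1 (R : numDomainType) (T : finType) (Q : pred T) :
  (forall a b, Q a -> Q b -> a = b) -> \sum_a (Q a)%:R <= 1 :> R.
Proof.
move=> Q_uniq; case: (pickP Q) => [a Qa | Q0]; last first.
  by rewrite big1 ?ler01 // => b _; rewrite Q0.
rewrite (bigD1 a) //= Qa big1 ?addr0 // => b nba.
by case Qb: (Q b) => //; move: nba; rewrite (Q_uniq b a Qb Qa) eqxx.
Qed.

Lemma weighted_sum_le (R : numDomainType) (T : finType) (P : pred T)
    (w f g : T -> R) :
  (forall t, 0 <= w t) -> (forall t, ~~ P t -> w t = 0) ->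
  (forall t, P t -> f t <= g t) ->
  \sum_t w t * f t <= \sum_t w t * g t.
Proof.
move=> w_ge0 w_out fg; apply: ler_sum => t _.
by case Pt: (P t); [rewrite ler_wpM2l ?fg | rewrite w_out ?Pt // !mul0r].
Qed.

Lemma sum_outer_incvE (R : nzRingType) (m : nat) (lam : {set 'I_m} -> R)
    (p q : 'I_m) :
  (\sum_(A : {set 'I_m}) lam A *: (incv R A *m (incv R A)^T)) p q =
  \sum_(A : {set 'I_m}) lam A * ((p \in A)%:R * (q \in A)%:R).
Proof. by rewrite summxE; apply: eq_bigr => A _; rewrite !mxE big_ord1 !mxE. Qed.

Lemma stable_clique_le1 (R : numDomainType) (m c : nat) (E : rel 'I_m)
    (f : 'I_c -> 'I_m) (A : {set 'I_m}) :
  (forall i j, i != j -> E (f i) (f j)) -> stable E A ->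
  \sum_i (f i \in A)%:R <= 1 :> R.
Proof.
move=> f_clique /forallP A_stable; apply: sum_natr_le1 => i j Ai Aj.
apply/eqP/negPn/negP => /f_clique Eij.
by move: (A_stable (f i)) => /forallP/(_ (f j)); rewrite Ai Aj Eij.
Qed.

Lemma mx_symE (R : Type) (m : nat) (X : 'M[R]_m) (a b : 'I_m) :
  X^T = X -> X a b = X b a.
Proof. by move=> X_sym; rewrite -[in LHS]X_sym mxE. Qed.

Lemma stable_set0 (m : nat) (E : rel 'I_m) : stable E set0.
Proof. by apply/forallP => a; apply/forallP => b; rewrite in_set0. Qed.

Lemma stable_set2 (m : nat) (E : rel 'I_m) (a b : 'I_m) :
  (forall c, ~~ E c c) -> ~~ E a b -> ~~ E b a -> stable E [set a; b].
Proof.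
move=> E_irr nEab nEba; apply/forallP => i; apply/forallP => j.
by rewrite !in_set2; apply/implyP => /andP[/orP[]/eqP-> /orP[]/eqP->].
Qed.

Lemma stable_set1 (m : nat) (E : rel 'I_m) (a : 'I_m) :
  (forall c, ~~ E c c) -> stable E [set a].
Proof. by move=> E_irr; rewrite -[[set a]]setUid stable_set2. Qed.

Section DiagonallyDominant.
Variables (R : realType) (m : nat) (E : rel 'I_m) (X : 'M[R]_m).
Hypothesis E_irr : forall a, ~~ E a a.
Hypothesis X_sym : X^T = X.
Hypothesis X_ge0 : forall a b, 0 <= X a b.
Hypothesis X_edge : forall a b, E a b -> X a b = 0.

Definition offdiag_sum (a : 'I_m) : R := \sum_(b | b != a) X a b.

Hypothesis X_dom : forall a, offdiag_sum a <= X a a.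
Hypothesis X_trace : \sum_a X a a <= 1 + 2^-1 * \sum_a offdiag_sum a.

Let slack a : R := X a a - offdiag_sum a.
Let empty_weight : R := 1 - \sum_a X a a + 2^-1 * \sum_a offdiag_sum a.

(* The double sum visits each pair {a, b} twice. *)
Let weight (A : {set 'I_m}) : R :=
  (A == set0)%:R * empty_weight + \sum_a (A == [set a])%:R * slack a
  + 2^-1 * \sum_a \sum_(b | b != a) (A == [set a; b])%:R * X a b.

Lemma weight_sumE (g : {set 'I_m} -> R) :
  \sum_A weight A * g A = empty_weight * g set0 + \sum_a slack a * g [set a]
    + 2^-1 * \sum_a \sum_(b | b != a) X a b * g [set a; b].
Proof.
rewrite /weight; under eq_bigr do rewrite !mulrDl.
rewrite !big_split /=; congr (_ + _ + _).
- under eq_bigr do rewrite -mulrA.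
  exact: (sum_natr_eqMl (fun A => empty_weight * g A)).
- under eq_bigr do rewrite mulr_suml.
  rewrite exchange_big /=; apply: eq_bigr => a _.
  under eq_bigr do rewrite -mulrA.
  exact: (sum_natr_eqMl (fun A => slack a * g A)).
- under eq_bigr do rewrite -mulrA mulr_suml.
  rewrite -mulr_sumr exchange_big /=; congr (_ * _); apply: eq_bigr => a _.
  under eq_bigr do rewrite mulr_suml.
  rewrite exchange_big /=; apply: eq_bigr => b _.
  under eq_bigr do rewrite -mulrA.
  exact: (sum_natr_eqMl (fun A => X a b * g A)).
Qed.

Lemma weight_ge0 A : 0 <= weight A.
Proof.
have slack_ge0 a : 0 <= slack a by rewrite subr_ge0.
have empty_ge0 : 0 <= empty_weight.
  by move: X_trace; rewrite /empty_weight; lra.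
apply: addr_ge0; first apply: addr_ge0.
- exact: mulr_ge0.
- by apply: sumr_ge0 => a _; apply: mulr_ge0.
- apply: mulr_ge0; first by rewrite invr_ge0 ler0n.
  by do 2!apply: sumr_ge0 => ? _; apply: mulr_ge0.
Qed.

Lemma weight_sum1 : \sum_A weight A = 1.
Proof.
under eq_bigr do rewrite -[weight _]mulr1.
rewrite (weight_sumE (fun=> 1)); under eq_bigr do rewrite mulr1.
under [in S in 2^-1 * S]eq_bigr do under eq_bigr do rewrite mulr1.
rewrite mulr1 sumrB /empty_weight /offdiag_sum; lra.
Qed.

Lemma weight_unstable A : ~~ stable E A -> weight A = 0.
Proof.
move=> A_unstable.
have neq_stable B : stable E B -> (A == B) = false.
  by move=> B_stable; apply: contraNF A_unstable => /eqP->.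
rewrite /weight neq_stable ?stable_set0 // mul0r add0r big1 ?add0r; last first.
  by move=> a _; rewrite neq_stable ?stable_set1 // mul0r.
rewrite big1 ?mulr0 // => a _; rewrite big1 // => b _.
have [Eab | nEab] := boolP (E a b); first by rewrite X_edge // mulr0.
have [Eba | nEba] := boolP (E b a).
  by rewrite (mx_symE _ _ X_sym) X_edge // mulr0.
by rewrite neq_stable ?stable_set2 // mul0r.
Qed.

Lemma weight_outer_diag p :
  \sum_A weight A * ((p \in A)%:R * (p \in A)%:R) = X p p.
Proof.
under eq_bigr do rewrite natr_bool_mulrr.
rewrite weight_sumE in_set0 mulr0 add0r.
under eq_bigr do rewrite in_set1.
rewrite sum_natr_eqMr // (bigD1 p) //=.
under eq_bigr do rewrite set21 mulr1.
rewrite -/(offdiag_sum p).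
rewrite [S in offdiag_sum p + S](eq_bigr (fun a => X p a)) => [|a a_neq_p].
  by rewrite -/(offdiag_sum p) /slack; lra.
under eq_bigr do rewrite in_set2 eq_sym (negbTE a_neq_p).
by rewrite sum_natr_eqMr 1?eq_sym // (mx_symE _ _ X_sym).
Qed.

Lemma weight_outer_offdiag p q : p != q ->
  \sum_A weight A * ((p \in A)%:R * (q \in A)%:R) = X p q.
Proof.
move=> p_neq_q; have q_neq_p : q != p by rewrite eq_sym.
rewrite weight_sumE in_set0 mul0r mulr0 add0r.
rewrite big1 ?add0r => [|a _]; last first.
  rewrite !in_set1; have [<-|] := eqVneq p a; last by rewrite mul0r mulr0.
  by rewrite (negbTE q_neq_p) !mulr0.
rewrite (bigD1 p) //=.
under eq_bigr do rewrite set21 mul1r in_set2 (negbTE q_neq_p) /=.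
rewrite sum_natr_eqMr 1?eq_sym //.
rewrite (eq_bigr (fun a => X a p * (q == a)%:R)) => [|a a_neq_p].
  by rewrite sum_natr_eqMr 1?eq_sym // [X q p](mx_symE _ _ X_sym); lra.
rewrite (bigD1 p) /=; last by rewrite eq_sym.
rewrite set22 mul1r in_set2 (negbTE q_neq_p) orbF big1 ?addr0 // => b.
case/andP=> _ b_neq_p; rewrite in_set2 eq_sym (negbTE a_neq_p) /=.
by rewrite eq_sym (negbTE b_neq_p) mul0r mulr0.
Qed.

Lemma weight_outerE :
  X = \sum_A weight A *: (incv R A *m (incv R A)^T).
Proof.
apply/matrixP => p q; rewrite sum_outer_incvE.
have [<-|p_neq_q] := eqVneq p q; first by rewrite weight_outer_diag.
by rewrite weight_outer_offdiag.
Qed.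

Lemma STAB2_diag_dominant : STAB2 E X.
Proof.
exists weight; split; [exact: weight_ge0 | exact: weight_unstable |
  exact: weight_sum1 | exact: weight_outerE].
Qed.
End DiagonallyDominant.

Section TwoCliques.
Variables (R : realType) (k l : nat) (E : rel 'I_(k + l)) (X : 'M[R]_(k + l)).
Hypothesis C1_clique : forall i j : 'I_k, i != j -> E (lshift l i) (lshift l j).
Hypothesis C2_clique : forall i j : 'I_l, i != j -> E (rshift k i) (rshift k j).

Let cross_sum : R := \sum_(i < k) \sum_(j < l) X (lshift l i) (rshift k j).

Let two_cliques_ineqs :=
  [/\ forall i : 'I_k,
        \sum_(j < l) X (lshift l i) (rshift k j) <= X (lshift l i) (lshift l i),
      forall j : 'I_l,
        \sum_(i < k) X (lshift l i) (rshift k j) <= X (rshift k j) (rshift k j) &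
      \sum_(i < k + l) X i i <= 1 + cross_sum].

Lemma STAB2_two_cliques_ineqs : STAB2 E X -> two_cliques_ineqs.
Proof.
case=> lam [lam_ge0 lam_unstable lam_sum1 X_def].
rewrite /two_cliques_ineqs /cross_sum X_def.
pose u (A : {set 'I_(k + l)}) : R := \sum_(i < k) (lshift l i \in A)%:R.
pose v (A : {set 'I_(k + l)}) : R := \sum_(j < l) (rshift k j \in A)%:R.
have u_le1 A : stable E A -> u A <= 1 by apply: stable_clique_le1.
have v_le1 A : stable E A -> v A <= 1 by apply: stable_clique_le1.
have u_ge0 A : 0 <= u A by apply: sumr_ge0.
have v_ge0 A : 0 <= v A by apply: sumr_ge0.
have weighted := weighted_sum_le lam_ge0 lam_unstable.
split.
- move=> i; rewrite !sum_outer_incvE; under eq_bigr do rewrite sum_outer_incvE.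
  rewrite exchange_big /=; under eq_bigr do rewrite -mulr_sumr -mulr_sumr.
  apply: weighted => A A_stable; rewrite natr_bool_mulrr.
  exact: ler_piMr (v_le1 A A_stable).
- move=> j; rewrite !sum_outer_incvE; under eq_bigr do rewrite sum_outer_incvE.
  rewrite exchange_big /=; under eq_bigr do rewrite -mulr_sumr -mulr_suml.
  apply: weighted => A A_stable; rewrite natr_bool_mulrr.
  exact: ler_piMl (u_le1 A A_stable).
- under eq_bigr do rewrite sum_outer_incvE.
  under [S in _ <= _ + S]eq_bigr do
    (under eq_bigr do rewrite sum_outer_incvE; rewrite exchange_big /=).
  rewrite [S in S <= _]exchange_big [S in _ <= _ + S]exchange_big /=.
  rewrite -[in S in _ <= S + _]lam_sum1 -big_split /=.
  under [S in S <= _]eq_bigr do rewrite -mulr_sumr.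
  under [S in _ <= S]eq_bigr do
    (under eq_bigr do rewrite -mulr_sumr;
     rewrite -mulr_sumr -{1}[lam _]mulr1 -mulrDr).
  apply: weighted => A A_stable; under eq_bigr do rewrite natr_bool_mulrr.
  rewrite big_split_ord -big_distrlr /= -/(u A) -/(v A).
  have := u_le1 A A_stable; have := v_le1 A A_stable.
  have := u_ge0 A; have := v_ge0 A; nra.
Qed.

Hypothesis E_irr : forall a, ~~ E a a.
Hypothesis X_sym : X^T = X.
Hypothesis X_ge0 : forall a b, 0 <= X a b.
Hypothesis X_edge : forall a b, E a b -> X a b = 0.

Lemma offdiag_sum_lshift i :
  offdiag_sum X (lshift l i) = \sum_(j < l) X (lshift l i) (rshift k j).
Proof.
rewrite /offdiag_sum big_mkcond big_split_ord /= big1 ?add0r => [|i' _].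
  by apply: eq_bigr => j _; rewrite eq_rlshift.
rewrite (inj_eq (@lshift_inj _ _)); have [//|i'_neq_i] := eqVneq i' i.
by rewrite X_edge // C1_clique // eq_sym.
Qed.

Lemma offdiag_sum_rshift j :
  offdiag_sum X (rshift k j) = \sum_(i < k) X (lshift l i) (rshift k j).
Proof.
rewrite /offdiag_sum big_mkcond big_split_ord /=.
rewrite [S in _ + S]big1 ?addr0 => [|j' _].
  by apply: eq_bigr => i _; rewrite eq_lrshift /= (mx_symE _ _ X_sym).
rewrite (inj_eq (@rshift_inj _ _)); have [//|j'_neq_j] := eqVneq j' j.
by rewrite X_edge // C2_clique // eq_sym.
Qed.

Lemma sum_offdiag_sum : \sum_a offdiag_sum X a = cross_sum + cross_sum.
Proof.
rewrite big_split_ord /=; congr (_ + _).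
  by apply: eq_bigr => i _; rewrite offdiag_sum_lshift.
rewrite /cross_sum exchange_big /=.
by apply: eq_bigr => j _; rewrite offdiag_sum_rshift.
Qed.

Lemma two_cliques_ineqs_STAB2 : two_cliques_ineqs -> STAB2 E X.
Proof.
case=> C1_dom C2_dom trace_le; apply: STAB2_diag_dominant => // [a|].
  case: (split_ordP a) => [i ->|j ->].
    by rewrite offdiag_sum_lshift.
  by rewrite offdiag_sum_rshift.
by rewrite sum_offdiag_sum; lra.
Qed.

Lemma STAB2_two_cliquesP : STAB2 E X <-> two_cliques_ineqs.
Proof.
by split; [exact: STAB2_two_cliques_ineqs | exact: two_cliques_ineqs_STAB2].
Qed.
End TwoCliques.

Theorem lemmaC1 (R : realType) (n k l : nat) (e : rel 'I_n)
  (hG : simple_graph e) (hkl : (k + l <= n)%N)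
  (hC1 : forall i j : 'I_k, i != j ->
           induced_first hkl e (lshift l i) (lshift l j))
  (hC2 : forall i j : 'I_l, i != j ->
           induced_first hkl e (rshift k i) (rshift k j))
  (hnonadj : exists (i : 'I_k) (j : 'I_l),
           ~~ induced_first hkl e (lshift l i) (rshift k j))
  (X : 'M[R]_(k + l))
  (hsym : X^T = X) (hpsd : psd X)
  (hnneg : forall i j, 0 <= X i j)
  (hedge : forall i j, induced_first hkl e i j -> X i j = 0) :
  STAB2 (induced_first hkl e) X <->
  [/\ forall i : 'I_k,
        \sum_(j < l) X (lshift l i) (rshift k j) <= X (lshift l i) (lshift l i),
      forall j : 'I_l,
        \sum_(i < k) X (lshift l i) (rshift k j) <= X (rshift k j) (rshift k j) &
      \sum_(i < k + l) X i i <=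
        1 + \sum_(i < k) \sum_(j < l) X (lshift l i) (rshift k j)].
Proof.
have induced_irr a : ~~ induced_first hkl e a a by case: hG => _; apply.
exact: STAB2_two_cliquesP.
Qed.
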